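(* Let $C\subseteq\mathbb{F}_2^n$ be a linear code, let $0\le p\le1$, and let $t=\log_2(1+p)$. Then \[ \log_2 \mathbb{E}_{S \sim p}\big(2^{|S| - r_C(S)}\big) ~\le~ \mathbb{E}_{T \sim t}\big(|T| - r_C(T)\big). \] Moreover, equality holds if $C$ is a subcube, i.e. $C=\{x\in\mathbb{F}_2^n: x_i=0 \text{ for all } i\notin K\}$ for some $K\subseteq[n]$.
   Context: Fix a generating matrix of $C$ (a matrix over $\mathbb{F}_2$ whose rows span $C$, with columns indexed by $[n]$). For $S\subseteq[n]$, $r_C(S)$ is the rank over $\mathbb{F}_2$ of the set of columns indexed by $S$ (the rank function of the binary matroid on $[n]$ defined by the generating matrix; it does not depend on the choice of generating matrix). For $0\le\lambda\le1$, $S\sim\lambda$ denotes a random subset of $[n]$ containing each element independently with probability $\lambda$. *)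

From mathcomp Require Import all_boot all_order all_algebra.
From mathcomp Require Import reals exp.
Set Implicit Arguments. Unset Strict Implicit. Unset Printing Implicit Defensive.
Import Order.TTheory GRing.Theory Num.Theory.
Local Open Scope ring_scope.

Definition log2 (R : realType) (x : R) : R := ln x / ln 2.

(* r_C(S): rank over F_2 of the columns of the generating matrix G indexed by S,
   i.e. rank of the submatrix consisting exactly of the columns j in S. *)
Definition rkC (k n : nat) (G : 'M['F_2]_(k, n)) (S : {set 'I_n}) : nat :=
  \rank (colsub (fun j : 'I_#|S| => enum_val j) G).

Definition Erand (R : realType) (n : nat) (lam : R) (f : {set 'I_n} -> R) : R :=
  \sum_(S : {set 'I_n}) lam ^+ #|S| * (1 - lam) ^+ (n - #|S|) * f S.

(* C is the subcube {x : x_i = 0 for all i notin K}; C is the row space of G *)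
Definition is_subcube (k n : nat) (G : 'M['F_2]_(k, n)) (K : {set 'I_n}) : Prop :=
  forall x : 'rV['F_2]_n, (x <= G)%MS <-> (forall i : 'I_n, i \notin K -> x 0 i = 0).

From mathcomp Require Import all_boot all_order all_algebra.
From mathcomp Require Import reals exp.
From mathcomp Require Import interval_inference sequences convex.
From mathcomp Require Import ring lra zify.
Set Implicit Arguments. Unset Strict Implicit. Unset Printing Implicit Defensive.
Import Order.TTheory GRing.Theory Num.Theory.
Local Open Scope ring_scope.

(* Proof of Proposition 1.3.  Write g(S) = |S| - r_C(S) for the nullity of
   S in the binary matroid of C, and t = log2 (1 + p), so that 2^t = 1 + p.

   Adding an element e to S raises r_C by at most one,
      hence g(e + S) - g(S) is 0 or 1.  For a subcube on K the increment
      does not depend on S: it is 0 if e is in K and 1 otherwise.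
   2. Two-point inequality.  By concavity of m |-> m^t, for Y/X in [1,2]
        log2 ((1-p) X + p Y) <= (1-t) log2 X + t log2 Y,
      with equality when Y = X or Y = 2X.
   3. Tensorization.  Let Esub q U A f be the expectation of f (A u S) for
      a q-random subset S of U.  Conditioning on one element e of U writes
      both sides of the theorem as two-point mixtures of the same quantities
      with U replaced by U \ {e}; by step 1 these satisfy X <= Y <= 2X, so
      induction on U and step 2 give the inequality, and in the subcube
      case the endpoint equalities of step 2 give equality. *)

Lemma rank_adds_row (F : fieldType) (m r : nat) (A : 'M[F]_(m, r)) (v : 'rV[F]_r) :
  \rank (A + v)%MS = (\rank A + ~~ (v <= A)%MS)%N.
Proof.
have [vA|vNA] := boolP (v <= A)%MS.
  by rewrite addn0 (addsmx_idPl vA).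
apply/eqP; rewrite addn1 eqn_leq; apply/andP; split.
  apply: leq_trans (leq_of_leqif (mxrank_adds_leqif A v)) _.
  by rewrite -[X in (_ <= X)%N]addn1 leq_add2l rank_leq_row.
have : (A < A + v)%MS.
  by rewrite ltmxE addsmxSl; apply: contra vNA; apply: submx_trans (addsmxSr A v).
by rewrite ltmxErank => /andP[_].
Qed.

Section ColumnRank.
Variables (k n : nat) (G : 'M['F_2]_(k, n)).
Implicit Types (S T : {set 'I_n}) (e : 'I_n).

Definition colrows (S : {set 'I_n}) : 'M['F_2]_(#|S|, k) :=
  rowsub (fun j : 'I_#|S| => enum_val j) G^T.

Lemma rkC_colrows S : rkC G S = \rank (colrows S).
Proof. by rewrite /rkC -mxrank_tr trmx_mxsub. Qed.

Lemma col_sub_colrows S j : j \in S -> (row j G^T <= colrows S)%MS.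
Proof. by move=> jS; rewrite -(enum_rankK_in jS jS) -row_rowsub row_sub. Qed.

Lemma colrows_setU1 S e : (colrows (e |: S) :=: colrows S + row e G^T)%MS.
Proof.
apply/eqmxP; rewrite addsmx_sub; apply/and3P; split.
- apply/row_subP => i; rewrite row_rowsub.
  have := enum_valP i; rewrite in_setU1 => /orP[/eqP->|iS].
    exact: addsmxSr.
  by apply: submx_trans (addsmxSl _ _); apply: col_sub_colrows.
- apply/row_subP => i; rewrite row_rowsub; apply: col_sub_colrows.
  by rewrite in_setU1 (enum_valP i) orbT.
- by apply: col_sub_colrows; rewrite setU11.
Qed.

Lemma rkC_setU1 S e :
  rkC G (e |: S) = (rkC G S + ~~ (row e G^T <= colrows S)%MS)%N.
Proof. by rewrite !rkC_colrows (colrows_setU1 S e) rank_adds_row. Qed.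

Definition nullity (S : {set 'I_n}) : nat := (#|S| - rkC G S)%N.

Lemma nullity_step S e : (nullity S <= nullity (e |: S) <= (nullity S).+1)%N.
Proof.
have [eS|eS] := boolP (e \in S).
  by rewrite (setUidPr _) ?sub1set // leqnn leqnSn.
have rk_le : (rkC G S <= #|S|)%N by apply: rank_leq_col.
by rewrite /nullity cardsU1 eS rkC_setU1; case: (~~ _); lia.
Qed.

Lemma rowsub_tr_mul m (f : 'I_m -> 'I_n) (y : 'rV_k) i :
  (rowsub f G^T *m y^T) i 0 = (y *m G) 0 (f i).
Proof. by rewrite !mxE; apply: eq_bigr => l _; rewrite !mxE mulrC. Qed.

Section Subcube.
Variable K : {set 'I_n}.
Hypothesis subcubeK : is_subcube G K.

(* Outside K every codeword vanishes, so the column of G is zero. *)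
Lemma col_notin_subcube e : e \notin K -> row e G^T = 0.
Proof.
move=> eK; apply/rowP => i; rewrite !mxE.
by have := (proj1 (subcubeK (row i G)) (row_sub i G)) e eK; rewrite mxE.
Qed.

(* Inside K the unit vector delta_e is a codeword y G, and y separates the
   column e from every other column, so column e is not spanned by them. *)
Lemma col_in_subcube e T : e \in K -> e \notin T ->
  ~~ (row e G^T <= colrows T)%MS.
Proof.
move=> eK eT; have : ((delta_mx 0 e : 'rV['F_2]_n) <= G)%MS.
  apply/(proj2 (subcubeK _)) => i iK; rewrite mxE /=.
  by case: eqP => // ie; move: iK; rewrite ie eK.
case/submxP => y yG.
have colsT0 : colrows T *m y^T = 0.
  apply/matrixP => i j; rewrite ord1 rowsub_tr_mul -yG !mxE /=.
  by case: eqP => // ie; move: (enum_valP i); rewrite ie (negPf eT).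
apply/negP => /submxP[z ez].
have := rowsub_tr_mul (fun _ : 'I_1 => e) y 0.
by rewrite -rowEsub ez -mulmxA colsT0 mulmx0 -yG !mxE !eqxx.
Qed.

(* For a subcube, each coordinate either always raises the rank (e in K)
   or never does (e outside K), so it never, resp. always, raises the
   nullity. *)
Lemma subcube_nullity_step e :
  (forall T, e \notin T -> nullity (e |: T) = nullity T) \/
  (forall T, e \notin T -> nullity (e |: T) = (nullity T).+1).
Proof.
have [eK|eK] := boolP (e \in K); [left | right] => T eT;
  rewrite /nullity cardsU1 eT rkC_setU1 add1n.
  by rewrite col_in_subcube //= addn1 subSS.
by rewrite col_notin_subcube // sub0mx addn0 subSn // rank_leq_col.
Qed.

End Subcube.
End ColumnRank.

Section PowerConcavity.
Variable R : realType.

Lemma powR_expR (a x : R) : 0 < a -> a `^ x = expR (x * ln a).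
Proof. by move=> a0; rewrite /powR gt_eqF. Qed.

(* Weighted AM-GM (Bernoulli): w^t <= t w + (1 - t) for exponents in [0,1];
   this is the concavity of ln at the points w and 1. *)
Lemma powR_le_affine (t w : R) : 0 <= t -> t <= 1 -> 0 < w ->
  w `^ t <= t * w + (1 - t).
Proof.
move=> t0 t1 w0.
have := @concave_ln R (Itv01 t0 t1) w 1 w0 ltr01.
rewrite !convRE ln1 mulr0 addr0 mulr1 => ln_le.
have mix_gt0 : 0 < t * w + (1 - t).
  have [->|t_neq0] := eqVneq t 0; first by rewrite mul0r add0r subr0.
  by rewrite ltr_pwDl ?subr_ge0 // mulr_gt0 // lt_neqAle eq_sym t_neq0.
by rewrite powR_expR // -[leRHS]lnK ?posrE // ler_expR.
Qed.

Lemma concave_powR (t l a b : R) : 0 <= t -> t <= 1 -> 0 <= l -> l <= 1 ->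
  0 < a -> 0 < b -> (1 - l) * a `^ t + l * b `^ t <= ((1 - l) * a + l * b) `^ t.
Proof.
move=> t0 t1 l0 l1 a0 b0; set c := (1 - l) * a + l * b.
have c0 : 0 < c.
  rewrite /c; have [->|l_neq0] := eqVneq l 0; first by rewrite subr0 mul1r mul0r addr0.
  rewrite ltr_wpDl ?mulr_ge0 ?subr_ge0 ?(ltW a0) // mulr_gt0 //.
  by rewrite lt_neqAle eq_sym l_neq0.
have scale x : 0 < x -> x `^ t = c `^ t * (x / c) `^ t.
  by move=> x0; rewrite -powRM ?ltW ?divr_gt0 // mulrC divfK ?gt_eqF.
rewrite (scale a a0) (scale b b0).
have -> : (1 - l) * (c `^ t * (a / c) `^ t) + l * (c `^ t * (b / c) `^ t)
    = c `^ t * ((1 - l) * (a / c) `^ t + l * (b / c) `^ t) by ring.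
rewrite -[leRHS]mulr1 ler_wpM2l ?powR_ge0 //.
have Ha := powR_le_affine t0 t1 (divr_gt0 a0 c0).
have Hb := powR_le_affine t0 t1 (divr_gt0 b0 c0).
have mix_is_1 : (1 - l) * (t * (a / c) + (1 - t)) + l * (t * (b / c) + (1 - t)) = 1.
  by rewrite /c; field; rewrite gt_eqF.
by rewrite -[leRHS]mix_is_1; apply: lerD; apply: ler_wpM2l; rewrite ?subr_ge0.
Qed.

Lemma powR_above_chord (t m : R) : 0 <= t -> t <= 1 -> 1 <= m -> m <= 2 ->
  1 + (m - 1) * (2 `^ t - 1) <= m `^ t.
Proof.
move=> t0 t1 m1 m2.
have := concave_powR t0 t1 (_ : 0 <= m - 1) (_ : m - 1 <= 1) ltr01 (ltr0n R 2).
rewrite powR1 !subr_ge0 lerBlDl => /(_ m1 m2).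
by congr (_ <= _); [ring | congr (_ `^ _); ring].
Qed.

End PowerConcavity.

Section BinaryLogarithm.
Variable R : realType.
Implicit Types x y : R.

Lemma ln2_gt0 : 0 < ln (2 : R).
Proof. by rewrite ln_gt0 // ltr1n. Qed.

Lemma log2M x y : 0 < x -> 0 < y -> log2 (x * y) = log2 x + log2 y.
Proof. by move=> x0 y0; rewrite /log2 lnM ?posrE // mulrDl. Qed.

Lemma log2_powR x r : 0 < x -> log2 (x `^ r) = r * log2 x.
Proof. by move=> x0; rewrite /log2 ln_powR mulrA. Qed.

Lemma log2_2 : log2 (2 : R) = 1.
Proof. by rewrite /log2 divff // gt_eqF // ln2_gt0. Qed.

Lemma log2_expn k : log2 (2%:R ^+ k : R) = k%:R.
Proof. by rewrite -powR_mulrn // log2_powR // log2_2 mulr1. Qed.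

Lemma ler_log2 x y : 0 < x -> 0 < y -> (log2 x <= log2 y) = (x <= y).
Proof. by move=> x0 y0; rewrite /log2 ler_pM2r ?invr_gt0 ?ln2_gt0 // ler_ln. Qed.

Lemma powR2_log2 x : 0 < x -> 2 `^ log2 x = x.
Proof.
by move=> x0; rewrite powR_expR // /log2 divfK ?gt_eqF ?ln2_gt0 // lnK.
Qed.

End BinaryLogarithm.

Section TwoPointMixture.
Variables (R : realType) (t p : R).
Hypotheses (t_ge0 : 0 <= t) (t_le1 : t <= 1) (pow2t : 2 `^ t = 1 + p).

Lemma log2_mix_le (X Y : R) : 0 < X -> X <= Y -> Y <= 2 * X ->
  log2 ((1 - p) * X + p * Y) <= (1 - t) * log2 X + t * log2 Y.
Proof.
move=> X0 XY YX; set m := Y / X.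
have m1 : 1 <= m by rewrite /m ler_pdivlMr // mul1r.
have m2 : m <= 2 by rewrite /m ler_pdivrMr.
have m0 : 0 < m by apply: lt_le_trans m1.
have mix_eq : (1 - p) * X + p * Y = X * (1 + (m - 1) * (2 `^ t - 1)).
  by rewrite pow2t /m; field; rewrite gt_eqF.
have mix_le : (1 - p) * X + p * Y <= X * m `^ t.
  by rewrite mix_eq; apply: ler_wpM2l; [exact: ltW | exact: powR_above_chord].
have mix0 : 0 < (1 - p) * X + p * Y.
  have pow_ge1 : 1 <= 2 `^ t.
    by rewrite -[leLHS](powRr0 2); apply: (ler_powR (ler1n R 2)).
  have chord_ge0 : 0 <= (m - 1) * (2 `^ t - 1) by rewrite mulr_ge0 ?subr_ge0.
  by rewrite mix_eq; apply: mulr_gt0 => //; lra.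
rewrite -(ler_log2 mix0 _) ?mulr_gt0 ?powR_gt0 // in mix_le.
apply: (le_trans mix_le).
have -> : log2 Y = log2 X + log2 m by rewrite -log2M // /m mulrC divfK ?gt_eqF.
by rewrite log2M ?powR_gt0 // log2_powR //; lra.
Qed.

Lemma log2_mix_same (X : R) :
  log2 ((1 - p) * X + p * X) = (1 - t) * log2 X + t * log2 X.
Proof. by rewrite -mulrDl subrK mul1r; ring. Qed.

Lemma log2_mix_double (X : R) : 0 < X ->
  log2 ((1 - p) * X + p * (2 * X)) = (1 - t) * log2 X + t * log2 (2 * X).
Proof.
move=> X0; have -> : (1 - p) * X + p * (2 * X) = 2 `^ t * X by rewrite pow2t; ring.
by rewrite !log2M ?powR_gt0 // log2_powR // log2_2; ring.
Qed.

End TwoPointMixture.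

Section RandomSubsets.
Variables (R : realType) (I : finType).
Implicit Types (q : R) (U A S : {set I}) (f h : {set I} -> R).

Definition Esub q U A f : R :=
  \sum_(S : {set I} | S \subset U) q ^+ #|S| * (1 - q) ^+ (#|U| - #|S|) * f (A :|: S).

Lemma Esub_set0 q A f : Esub q set0 A f = f A.
Proof.
rewrite /Esub (eq_bigl (pred1 set0)) => [|S]; last by rewrite subset0.
by rewrite big_pred1_eq cards0 !expr0 setU0 !mul1r.
Qed.

Lemma sum_subsets_split e U (F : {set I} -> R) : e \in U ->
  \sum_(S : {set I} | S \subset U) F S
    = \sum_(S : {set I} | S \subset U :\ e) (F S + F (e |: S)).
Proof.
move=> eU; rewrite big_split /= (bigID (fun S => e \in S)) /= addrC.
congr (_ + _); first by apply: eq_bigl => S; rewrite subsetD1.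
rewrite (reindex_onto (fun S => e |: S) (fun S => S :\ e)) /=; last first.
  by move=> S /andP[_ eS]; rewrite setD1K.
apply: eq_bigl => S; rewrite setU11 andbT subUset sub1set eU subsetD1.
have [eS|eS] := boolP (e \in S); last by rewrite setU1K // eqxx andbT.
rewrite andbF; case: eqP => [S_eq|]; last by rewrite andbF.
by move: eS; rewrite -S_eq setD11.
Qed.

Lemma Esub_split q U A f e : e \in U ->
  Esub q U A f = (1 - q) * Esub q (U :\ e) A f + q * Esub q (U :\ e) (e |: A) f.
Proof.
move=> eU; rewrite /Esub (sum_subsets_split _ eU) !mulr_sumr -big_split /=.
apply: eq_bigr => S sUe; have /subsetD1P[_ eS] := sUe.
have cardU : #|U| = (#|U :\ e|).+1 by rewrite (cardsD1 e U) eU.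
have cardS : #|e |: S| = (#|S|).+1 by rewrite cardsU1 eS.
have S_le : (#|S| <= #|U :\ e|)%N by apply: subset_leq_card.
by rewrite cardU cardS subSS (subSn S_le) setUCA setUA !exprS; ring.
Qed.

Lemma Esub_ind (P : {set I} -> {set I} -> Prop) :
  (forall A, P set0 A) ->
  (forall U A e, e \in U -> P (U :\ e) A -> P (U :\ e) (e |: A) -> P U A) ->
  forall U A, P U A.
Proof.
move=> P0 Pstep U; elim: {U}#|U| {-2}U (erefl #|U|) => [|m IH] U cardU A.
  by rewrite (cards0_eq cardU).
have [e eU] : exists e, e \in U by apply/card_gt0P; rewrite cardU.
have cardUe : #|U :\ e| = m by move: cardU; rewrite (cardsD1 e U) eU => -[].
by apply: (Pstep _ _ e eU); apply: IH.
Qed.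

Lemma Esub_le q U A B f h : 0 <= q -> q <= 1 ->
  (forall S, f (A :|: S) <= h (B :|: S)) -> Esub q U A f <= Esub q U B h.
Proof.
move=> q0 q1 fh; apply: ler_sum => S _.
by apply: ler_wpM2l => //; rewrite !mulr_ge0 ?exprn_ge0 ?subr_ge0.
Qed.

Lemma Esub_eq_in q U A B f h :
  (forall S, S \subset U -> f (A :|: S) = h (B :|: S)) ->
  Esub q U A f = Esub q U B h.
Proof. by move=> fh; apply: eq_bigr => S /fh ->. Qed.

Lemma EsubZ q U A f (c : R) : Esub q U A (fun S => c * f S) = c * Esub q U A f.
Proof. by rewrite /Esub mulr_sumr; apply: eq_bigr => S _; ring. Qed.

Lemma Esub_gt0 q U A f : 0 <= q -> q <= 1 -> (forall S, 0 < f S) ->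
  0 < Esub q U A f.
Proof.
move=> q0 q1 f_gt0; move: U A; apply: Esub_ind => [A|U A e eU X0 Y0].
  by rewrite Esub_set0.
rewrite (Esub_split _ _ _ eU); have [q_eq0|q_neq0] := eqVneq q 0.
  by move: X0; rewrite q_eq0 subr0 mul1r mul0r addr0.
apply: ltr_wpDl; first by rewrite mulr_ge0 ?subr_ge0 // ltW.
by rewrite mulr_gt0 // lt_neqAle eq_sym q_neq0.
Qed.

End RandomSubsets.

Lemma Erand_Esub (R : realType) (n : nat) (q : R) (f : {set 'I_n} -> R) :
  Erand q f = Esub q setT set0 f.
Proof.
rewrite /Erand /Esub [RHS](eq_bigl xpredT) => [|S]; last by rewrite subsetT.
by apply: eq_bigr => S _; rewrite cardsT card_ord set0U.
Qed.

Section Tensorization.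
Variables (R : realType) (I : finType) (g : {set I} -> nat) (p : R).
Hypotheses (p_ge0 : 0 <= p) (p_le1 : p <= 1).

Let t := log2 (1 + p).

Lemma pow2_log2_1p : 2 `^ t = 1 + p.
Proof. by rewrite powR2_log2 // ltr_wpDr. Qed.

Lemma log2_1p_ge0 : 0 <= t.
Proof. by rewrite /t /log2 divr_ge0 ?ln_ge0 ?lerDl // ltW // ln2_gt0. Qed.

Lemma log2_1p_le1 : t <= 1.
Proof. by rewrite -(log2_2 R) ler_log2 ?ltr_wpDr // -[2]/(1 + 1 : R) lerD2l. Qed.

Let h (S : {set I}) : R := 2%:R ^+ g S.
Let gR (S : {set I}) : R := (g S)%:R.

Let h_gt0 S : 0 < h S.
Proof. by rewrite exprn_gt0 // ltr0n. Qed.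

(* If adding an element raises g by 0 or 1, the inequality tensorizes:
   conditioning on one element reduces it to log2_mix_le. *)
Lemma Esub_log2_le :
  (forall S e, (g S <= g (e |: S) <= (g S).+1)%N) ->
  forall U A : {set I}, log2 (Esub p U A h) <= Esub t U A gR.
Proof.
move=> g_step; apply: Esub_ind => [A|U A e eU leX leY].
  by rewrite !Esub_set0 log2_expn.
set X := Esub p (U :\ e) A h in leX *; set Y := Esub p (U :\ e) (e |: A) h in leY *.
have X_le_Y : X <= Y.
  apply: Esub_le => // S; rewrite /h -setUA ler_eXn2l ?ltr1n //.
  by case/andP: (g_step (A :|: S) e).
have Y_le_2X : Y <= 2 * X.
  rewrite /X -EsubZ; apply: Esub_le => // S.
  rewrite /h -setUA -exprS ler_eXn2l ?ltr1n //.
  by case/andP: (g_step (A :|: S) e).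
rewrite !(Esub_split _ _ _ eU) -/X -/Y.
apply: le_trans (log2_mix_le log2_1p_ge0 log2_1p_le1 pow2_log2_1p
  (Esub_gt0 (U :\ e) A p_ge0 p_le1 h_gt0) X_le_Y Y_le_2X) _.
apply: lerD; apply: ler_wpM2l => //.
  by rewrite subr_ge0 log2_1p_le1.
exact: log2_1p_ge0.
Qed.

(* If every element either never or always raises g (among sets not yet
   containing it), each conditioning step hits an endpoint case of the
   two-point inequality, so equality holds. *)
Lemma Esub_log2_eq :
  (forall e : I, (forall T : {set I}, e \notin T -> g (e |: T) = g T) \/
                 (forall T : {set I}, e \notin T -> g (e |: T) = (g T).+1)) ->
  forall U A : {set I}, [disjoint A & U] -> log2 (Esub p U A h) = Esub t U A gR.
Proof.
move=> g_dich; apply: Esub_ind => [A _|U A e eU eqX eqY dAU].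
  by rewrite !Esub_set0 log2_expn.
have eA : e \notin A by rewrite (disjointFl dAU eU).
have dAUe : [disjoint A & U :\ e].
  by apply: disjointWr dAU; apply: subD1set.
have dAUe' : [disjoint e |: A & U :\ e].
  by rewrite disjoints_subset subUset sub1set !inE eqxx -disjoints_subset dAUe.
rewrite !(Esub_split _ _ _ eU) -(eqX dAUe) -(eqY dAUe').
set X := Esub p (U :\ e) A h; set Y := Esub p (U :\ e) (e |: A) h.
have eAS (S : {set I}) : S \subset U :\ e -> e \notin A :|: S.
  by case/subsetD1P => _ eS; rewrite in_setU negb_or eA.
have X_gt0 : 0 < X by apply: Esub_gt0 => //; apply: h_gt0.
have [g_same|g_incr] := g_dich e.
  have -> : Y = X by apply: Esub_eq_in => S /eAS eAS'; rewrite /h -setUA g_same.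
  exact: log2_mix_same.
have -> : Y = 2 * X.
  rewrite /X -EsubZ; apply: Esub_eq_in => S /eAS eAS'.
  by rewrite /h -setUA g_incr // exprS.
exact: (log2_mix_double pow2_log2_1p X_gt0).
Qed.

End Tensorization.

Theorem proposition1p3 (R : realType) (k n : nat) (G : 'M['F_2]_(k, n)) (p : R) :
  0 <= p -> p <= 1 ->
  let t := log2 (1 + p) in
  log2 (Erand p (fun S => 2%:R ^+ (#|S| - rkC G S)))
    <= Erand t (fun T => (#|T| - rkC G T)%:R)
  /\ ((exists K : {set 'I_n}, is_subcube G K) ->
      log2 (Erand p (fun S => 2%:R ^+ (#|S| - rkC G S)))
        = Erand t (fun T => (#|T| - rkC G T)%:R)).
Proof.
move=> p_ge0 p_le1 t; rewrite !Erand_Esub; split.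
  exact: (Esub_log2_le (g := nullity G) p_ge0 p_le1 (@nullity_step _ _ G)).
case=> K subcubeK.
apply: (Esub_log2_eq (g := nullity G) p_ge0 p_le1
  (subcube_nullity_step subcubeK)).
by rewrite disjoints_subset sub0set.
Qed.
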